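(* Let $\phi\colon\mathcal{A}^+\to\mathcal{C}^+$ and $\tau\colon\mathcal{B}^+\to\mathcal{C}^+$ be morphisms such that $\tau$ is $\ell$-proper with $\ell\ge|\phi|_1^4$, and $\phi(\mathcal{A}^+)\cap\tau(\mathcal{B}^{++})\neq\emptyset$. Then there exist an alphabet $\mathcal{D}$ and morphisms $q\colon\mathcal{B}^+\to\mathcal{D}^+$, $p\colon\mathcal{D}^+\to\mathcal{C}^+$ such that (i) $\#\mathcal{D}\le\#\mathcal{A}$, (ii) $\tau=pq$, and (iii) $q$ is letter-onto and proper.
   Context: Alphabets are finite sets; $\mathcal{A}^+$ is the free semigroup of nonempty finite words over $\mathcal{A}$, and a morphism is a semigroup homomorphism. $\mathcal{B}^{++}$ denotes the set of words in $\mathcal{B}^+$ in which every letter of $\mathcal{B}$ occurs. For a morphism $\sigma\colon\mathcal{A}^+\to\mathcal{B}^+$, $|\sigma|_1=\sum_{a\in\mathcal{A}}|\sigma(a)|$. $\sigma$ is $r$-proper if there exist $u,v\in\mathcal{B}^r$ such that every $\sigma(a)$, $a\in\mathcal{A}$, starts with $u$ and ends with $v$; proper means $1$-proper; letter-onto means every $b\in\mathcal{B}$ occurs in some $\sigma(a)$. *)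

From mathcomp Require Import all_boot.
Set Implicit Arguments. Unset Strict Implicit. Unset Printing Implicit Defensive.

(* A morphism A^+ -> C^+ is given by the images of the letters; it is a
   semigroup homomorphism of the free semigroups iff every image is nonempty. *)
Definition is_morphism (A C : finType) (s : A -> seq C) : Prop :=
  forall a : A, s a != [::].

Definition mapw (A C : finType) (s : A -> seq C) (w : seq A) : seq C :=
  flatten (map s w).

Definition size1 (A C : finType) (s : A -> seq C) : nat :=
  \sum_(a : A) size (s a).

Definition in_plus (A : finType) (w : seq A) : Prop := w != [::].

Definition in_plusplus (B : finType) (w : seq B) : Prop :=
  w != [::] /\ forall b : B, b \in w.

Definition r_proper (A C : finType) (r : nat) (s : A -> seq C) : Prop :=
  exists u v : seq C, [/\ size u = r, size v = r &
    forall a : A, prefix u (s a) /\ suffix v (s a)].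

Definition proper_morph (A C : finType) (s : A -> seq C) : Prop := r_proper 1 s.

Definition letter_onto (A C : finType) (s : A -> seq C) : Prop :=
  forall c : C, exists a : A, c \in s a.

From mathcomp Require Import all_boot zify.
From Stdlib Require Import Classical_Prop.

(* Starting from X = phi(A), we work with lists X of nonempty words such that
   tau(y) is an X-product, X has at most #A words and total length K at most
   |phi|_1.  While X is generated by a list of no more words and smaller total
   length, we pass to that list; so we may assume X irreducible.  By a form of
   the defect theorem an irreducible X admits no nontrivial relation: no word
   of X is a proper prefix or suffix of another, and for a proper suffix d of a
   word of X, no nonempty X-product, possibly followed by d, equals d followed
   by an X-product.  Hence two X-factorizations cannot stay out of phase for
   K^2 letters: at the first K cuts of one of them the other would sit at
   pairwise distinct proper suffixes of words of X, of which there are fewer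
   than K.  Every tau(b) begins with the same word u of length l >= K^2, so the
   X-factorization of tau(y) cuts between consecutive tau-images and each
   tau(b) is an X-product.  These products define q; q is proper since the
   first (last) factor of each tau(b) is the unique word of X that is a prefix
   of u (suffix of v). *)

Set Implicit Arguments. Unset Strict Implicit. Unset Printing Implicit Defensive.

Section Cat.
Variable T : Type.
Implicit Types (s t w : seq T) (ss : seq (seq T)).

Lemma catsI s : injective (cat s).
Proof. by move=> t1 t2 /(congr1 (drop (size s))); rewrite !drop_size_cat. Qed.

Lemma catIs s : injective (cat^~ s).
Proof.
move=> t1 t2 /= E; have /eqP := congr1 size E; rewrite !size_cat eqn_add2r => /eqP Et.
by have := congr1 (take (size t1)) E; rewrite take_size_cat // Et take_size_cat.
Qed.

Lemma eq_cat_prefix (a1 r1 a2 r2 : seq T) :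
  a1 ++ r1 = a2 ++ r2 -> size a1 <= size a2 -> exists d, a2 = a1 ++ d.
Proof.
move=> E le12; exists (drop (size a1) a2).
have := congr1 (take (size a1)) E; rewrite take_size_cat // takel_cat // => Ea1.
by rewrite {1}Ea1 cat_take_drop.
Qed.

Lemma eq_cat_suffix (a1 r1 a2 r2 : seq T) :
  r1 ++ a1 = r2 ++ a2 -> size a1 <= size a2 -> exists d, a2 = d ++ a1.
Proof.
move/(congr1 rev); rewrite !rev_cat => /eq_cat_prefix; rewrite !size_rev => E /E[d Ed].
by exists (rev d); rewrite -[a2]revK Ed rev_cat revK.
Qed.

Lemma all_take (P : pred T) n s : all P s -> all P (take n s).
Proof. by rewrite -{1}(cat_take_drop n s) all_cat => /andP[]. Qed.

Lemma all_drop (P : pred T) n s : all P s -> all P (drop n s).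
Proof. by rewrite -{1}(cat_take_drop n s) all_cat => /andP[]. Qed.

Lemma flatten_takeD ss i j : i <= j ->
  flatten (take j ss) = flatten (take i ss) ++ flatten (take (j - i) (drop i ss)).
Proof. by move=> le_ij; rewrite -flatten_cat -takeD subnKC. Qed.

Lemma flatten_dropD ss i j : i <= j ->
  flatten (drop i ss) = flatten (take (j - i) (drop i ss)) ++ flatten (drop j ss).
Proof.
by move=> le_ij; rewrite -flatten_cat -{2}(subnK le_ij) -drop_drop cat_take_drop.
Qed.

Lemma flatten_take_catr ss i j w :
  flatten (take i ss) ++ w = flatten (take j ss) -> w = flatten (take (j - i) (drop i ss)).
Proof.
move=> E; case: (leqP i j) => [le_ij | /ltnW le_ji].
  by apply: (@catsI (flatten (take i ss))); rewrite E -flatten_takeD.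
move: E; rewrite (flatten_takeD ss le_ji) -catA -[RHS]cats0 => /catsI.
move/(congr1 (@nilp T)); rewrite cat_nilp => /andP[_ /nilP->].
by move: le_ji; rewrite -subn_eq0 => /eqP->; rewrite take0.
Qed.

End Cat.

Section Words.
Variable T : eqType.
Implicit Types (w x z b d g t p u : seq T) (s X Y : seq (seq T)).

Lemma prefix_of_prefix w p u : prefix p w -> prefix u w -> size p <= size u -> prefix p u.
Proof.
rewrite !prefixE => /eqP Ep /eqP Eu le_pu.
by rewrite -{2}Ep -Eu take_takel.
Qed.

Lemma suffix_of_suffix w p u : suffix p w -> suffix u w -> size p <= size u -> suffix p u.
Proof.
rewrite -!prefix_rev -(size_rev p) -(size_rev u); exact: prefix_of_prefix.
Qed.

Lemma flatten_eq_cat s p r : flatten s = p ++ r ->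
  (exists i, p = flatten (take i s) /\ r = flatten (drop i s)) \/
  (exists i b g, [/\ i < size s, nth [::] s i = b ++ g, b != [::], g != [::] &
     p = flatten (take i s) ++ b /\ r = g ++ flatten (drop i.+1 s)]).
Proof.
elim: s p => [|z s IH] p /= E.
  by left; exists 0; case: p E => // -[].
have [p0 | p0] := eqVneq p [::]; first by left; exists 0; rewrite /= E p0.
case: (ltnP (size p) (size z)) => [lt_pz | le_zp].
  have Ep : take (size p) z = p.
    by have := congr1 (take (size p)) E; rewrite takel_cat ?take_size_cat // ltnW.
  right; exists 0, p, (drop (size p) z); split => //; first by rewrite -{1}Ep cat_take_drop.
    by rewrite -size_eq0 size_drop subn_eq0 -ltnNge.
  split => //; have := congr1 (drop (size p)) E.
  by rewrite drop_cat lt_pz drop_size_cat // => <-; rewrite drop0.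
have [p' Ep] := eq_cat_prefix E le_zp.
have E' : flatten s = p' ++ r by apply: (@catsI _ z); rewrite catA -Ep.
rewrite Ep; case: (IH _ E') => [[i [-> ->]] | [i [b [g [lt_i Ei b0 g0 [-> ->]]]]]].
  by left; exists i.+1.
by right; exists i.+1, b, g; rewrite catA.
Qed.

Definition sumlen X := sumn (map size X).

Lemma sumlen_cons x X : sumlen (x :: X) = size x + sumlen X.
Proof. by []. Qed.

Definition in_star X w := exists s, all (mem X) s /\ flatten s = w.

Definition lighter_basis Y X :=
  [/\ sumlen Y < sumlen X, [::] \notin Y & {in X, forall x, in_star Y x}].

Definition reducible X := exists2 Y, size Y <= size X & lighter_basis Y X.

Lemma all_mem_cons c X s : all (mem X) s -> all (mem (c :: X)) s.
Proof. by apply: sub_all => w; apply: (@mem_behead _ (c :: X)). Qed.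

Lemma in_star1 X x : x \in X -> in_star X x.
Proof. by move=> xX; exists [:: x]; rewrite /= xX cats0. Qed.

Lemma in_star_cat X w1 w2 : in_star X w1 -> in_star X w2 -> in_star X (w1 ++ w2).
Proof.
by move=> [s1 [A1 <-]] [s2 [A2 <-]]; exists (s1 ++ s2); rewrite all_cat A1 A2 flatten_cat.
Qed.

Lemma in_star_trans X Y w : {in X, forall x, in_star Y x} -> in_star X w -> in_star Y w.
Proof.
move=> XY [s [+ <-]]; elim: s => [_ | z s IH /andP[zX sX]]; first by exists [::].
exact: in_star_cat (XY z zX) (IH sX).
Qed.

Lemma in_star_rem X Y x :
  in_star Y x -> {subset rem x X <= Y} -> {in X, forall z, in_star Y z}.
Proof.
move=> xY remY z zX; have [-> // | zx] := eqVneq z x.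
by apply/in_star1/remY; rewrite rem_mem.
Qed.

Lemma flatten_eq_nil X s : [::] \notin X -> all (mem X) s -> (flatten s == [::]) = (s == [::]).
Proof. by move=> X0; case: s => // -[|c z] s /= /andP[zX _]; rewrite ?zX in X0. Qed.

Lemma sumlen_rem x X : x \in X -> sumlen (rem x X) + size x = sumlen X.
Proof. by move/perm_to_rem/(perm_map size)/perm_sumn; rewrite /sumlen addnC => ->. Qed.

Lemma size_le_sumlen x X : x \in X -> size x <= sumlen X.
Proof. by move/sumlen_rem <-; rewrite leq_addl. Qed.

Lemma size_flatten_le X s : all (mem X) s -> size (flatten s) <= size s * sumlen X.
Proof.
elim: s => //= z s IH /andP[zX sX].
by rewrite size_cat mulSn leq_add ?IH ?size_le_sumlen.
Qed.

Lemma size_cons_rem c x X : x \in X -> size (c :: rem x X) = size X.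
Proof.
by move=> xX; rewrite /= size_rem // prednK // lt0n size_eq0; apply: contraTneq xX => ->.
Qed.

Lemma lighter_basis_trans Y X' X : lighter_basis Y X' -> sumlen X' <= sumlen X ->
  {in X, forall x, in_star X' x} -> lighter_basis Y X.
Proof.
move=> [ltY Y0 X'Y] le_X' XX'; split => //; first exact: leq_trans ltY le_X'.
by move=> x /XX'; apply: in_star_trans.
Qed.

Lemma lighter_basis_rem X x : [::] \notin X -> x \in X -> x != [::] ->
  in_star (rem x X) x -> lighter_basis (rem x X) X.
Proof.
move=> X0 xX x0 xF; split; last exact: in_star_rem xF _.
  by rewrite -(sumlen_rem xX) -[X in X < _]addn0 ltn_add2l lt0n size_eq0.
by apply: contra X0 => /mem_rem.
Qed.

Lemma reducible_replace X x c : [::] \notin X -> x \in X -> c != [::] ->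
  size c < size x -> in_star (c :: rem x X) x -> reducible X.
Proof.
move=> X0 xX c0 lt_cx xY; exists (c :: rem x X); first by rewrite size_cons_rem.
split.
- by have := sumlen_rem xX; rewrite /sumlen /=; lia.
- by rewrite in_cons negb_or eq_sym c0; apply: contra X0 => /mem_rem.
- by apply: in_star_rem xY _ => z zX; rewrite in_cons zX orbT.
Qed.

Lemma reducible_split X x b d : [::] \notin X -> x \in X -> x = b ++ d ->
  b != [::] -> d != [::] -> [\/ b \in X, d \in X | b = d] -> reducible X.
Proof.
move=> X0 xX Ex b0 d0 bdX.
have [lt_bx lt_dx] : size b < size x /\ size d < size x.
  by move: b0 d0; rewrite Ex size_cat -!size_eq0; lia.
have rem_mem_lt c : c \in X -> size c < size x -> c \in rem x X.
  by move=> cX lt_cx; rewrite rem_mem //; apply: contraTneq lt_cx => ->; rewrite ltnn.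
case: bdX => [bX | dX | Ebd].
- apply: (reducible_replace X0 xX d0 lt_dx); rewrite {2}Ex.
  by apply: in_star_cat; apply: in_star1; rewrite ?mem_head // in_cons rem_mem_lt ?orbT.
- apply: (reducible_replace X0 xX b0 lt_bx); rewrite {2}Ex.
  by apply: in_star_cat; apply: in_star1; rewrite ?mem_head // in_cons rem_mem_lt ?orbT.
- apply: (reducible_replace X0 xX b0 lt_bx); rewrite {2}Ex -Ebd.
  by apply: in_star_cat; apply: in_star1; rewrite mem_head.
Qed.

Definition split_word x b d s :=
  flatten [seq if z == x then [:: b; d] else [:: z] | z <- s].

Lemma flatten_split_word x b d s : x = b ++ d -> flatten (split_word x b d s) = flatten s.
Proof.
move=> Ex; elim: s => //= z s IH; rewrite flatten_cat IH.
by case: eqP => [->|_] /=; rewrite ?cats0 ?Ex ?catA.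
Qed.

Lemma all_split_word (P : pred (seq T)) x b d s : P b -> P d ->
  {in s, forall z, z != x -> P z} -> all P (split_word x b d s).
Proof.
move=> Pb Pd; elim: s => //= z s IH sP; rewrite all_cat IH; last first.
  by move=> w ws; apply: sP; rewrite in_cons ws orbT.
by case: eqP => [_|/eqP zx] /=; rewrite ?Pb ?Pd ?sP ?mem_head.
Qed.

Theorem defect X s1 s2 : [::] \notin X -> all (mem X) s1 -> all (mem X) s2 ->
  flatten s1 = flatten s2 -> head [::] s1 != head [::] s2 ->
  exists2 Y, size Y < size X & lighter_basis Y X.
Proof.
have [n] := ubnP (sumlen X); elim: n X s1 s2 => // n IH X s1 s2 lt_Xn X0.
wlog le21 : s1 s2 / size (head [::] s2) <= size (head [::] s1).
  move=> sym A1 A2 E h12.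
  have [le | /ltnW le] := leqP (size (head [::] s2)) (size (head [::] s1)).
    exact: sym le A1 A2 E h12.
  by apply: (sym s2 s1) => //; rewrite eq_sym.
move=> A1 A2 E.
have nil12 : (s1 == [::]) = (s2 == [::]).
  by rewrite -(flatten_eq_nil X0 A1) -(flatten_eq_nil X0 A2) E.
case: s1 s2 nil12 le21 A1 A2 E => [|x1 r1] [|y1 r2] //= _ le21 /andP[x1X A1] /andP[y1X A2] E h12.
have [t Ex1] := eq_cat_prefix (esym E) le21.
have Et : t ++ flatten r1 = flatten r2 by apply: (@catsI _ y1); rewrite catA -Ex1.
have t0 : t != [::] by apply: contraNneq h12 => t0; rewrite Ex1 t0 cats0.
have y1F : y1 \in rem x1 X by rewrite rem_mem // eq_sym.
have x1_star Y : y1 \in Y -> t \in Y -> in_star Y x1.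
  by move=> y1Y tY; rewrite Ex1; apply: in_star_cat; apply: in_star1.
have [tF | tF] := boolP (t \in rem x1 X).
  exists (rem x1 X); first by rewrite -(size_cons_rem t x1X).
  by apply: lighter_basis_rem (x1_star _ y1F tF) => //; apply: contraNneq X0 => <-.
set X' := t :: rem x1 X.
have X'_X : {in X, forall z, in_star X' z}.
  apply: in_star_rem; first by apply: x1_star; rewrite !inE ?eqxx ?y1F ?orbT.
  by move=> z zF; rewrite inE zF orbT.
have sumX' : sumlen X' + size y1 = sumlen X.
  by rewrite sumlen_cons -(sumlen_rem x1X) Ex1 size_cat; lia.
have y1_pos : 0 < size y1 by rewrite lt0n size_eq0; apply: contraNneq X0 => <-.
have split_X' r : all (mem X) r -> all (mem X') (split_word x1 y1 t r).
  move=> rX; apply: all_split_word => [||z zr zx]; rewrite /X' !inE ?eqxx ?y1F ?orbT //.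
  by rewrite rem_mem ?orbT //; apply: (allP rX).
have [Y ltY lightY] : exists2 Y, size Y < size X' & lighter_basis Y X'.
  apply: (IH X' (t :: split_word x1 y1 t r1) (split_word x1 y1 t r2)).
  - lia.
  - by rewrite in_cons negb_or eq_sym t0; apply: contra X0 => /mem_rem.
  - by rewrite /= mem_head split_X'.
  - exact: split_X'.
  - by rewrite /= !flatten_split_word.
  - case: r2 A2 {Et E} => [|z r2] /=; first by rewrite t0.
    move=> /andP[zX _]; rewrite /split_word /=.
    case: ifP => [_ | /negbT zx] /=; apply: contraNneq tF => -> //; exact: rem_mem.
exists Y; first by rewrite -(size_cons_rem t x1X).
by apply: lighter_basis_trans lightY _ X'_X; lia.
Qed.

Lemma reducible_relation X x b d (w1 w2 : seq (seq T)) : [::] \notin X -> x \in X -> x = b ++ d ->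
  b != [::] -> d != [::] -> head [::] w1 \in X -> all (mem (d :: X)) w1 ->
  all (mem X) w2 -> flatten w1 = d ++ flatten w2 -> reducible X.
Proof.
move=> X0 xX Ex b0 d0 w1X A1 A2 E.
have [dX | dX] := boolP (d \in X); first exact: reducible_split X0 xX Ex b0 d0 (Or32 _ _ dX).
have [Ebd | nbd] := eqVneq b d; first exact: reducible_split X0 xX Ex b0 d0 (Or33 _ _ Ebd).
set X' := [:: b, d & rem x X].
have F_X' : {subset rem x X <= X'} by move=> z zF; rewrite !inE zF !orbT.
have split_X' s : all (mem (d :: X)) s -> all (mem X') (split_word x b d s).
  move=> sX; apply: all_split_word => [||z zs zx]; rewrite ?mem_head ?inE ?eqxx ?orbT //.
  have := allP sX z zs; rewrite inE => /orP[-> | zX]; first by rewrite orbT.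
  by rewrite rem_mem ?orbT.
case: w1 w1X A1 E => [|z1 w1] /=; first by rewrite (negbTE X0).
move=> z1X A1 E.
have [Y ltY lightY] : exists2 Y, size Y < size X' & lighter_basis Y X'.
  apply: (@defect X' (split_word x b d (z1 :: w1)) (d :: split_word x b d w2)).
  - rewrite !inE !negb_or ![[::] == _]eq_sym b0 d0 /=.
    by apply: contra X0 => /mem_rem.
  - exact: split_X'.
  - rewrite /= !inE eqxx orbT /=; apply: split_X'.
    exact: all_mem_cons.
  - by rewrite /= !flatten_split_word.
  - rewrite /split_word /=; case: ifP => _ //=.
    by apply: contraNneq dX => <-.
exists Y; first by rewrite -(size_cons_rem d xX).
apply: lighter_basis_trans lightY _ _.
  by have := sumlen_rem xX; rewrite !sumlen_cons Ex size_cat; lia.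
apply: in_star_rem F_X'.
by rewrite Ex; apply: in_star_cat; apply: in_star1; rewrite !inE eqxx ?orbT.
Qed.

Lemma irreducible_prefix_free X x1 x2 w : ~ reducible X -> [::] \notin X ->
  x1 \in X -> x2 \in X -> prefix x1 w -> prefix x2 w -> x1 = x2.
Proof.
move=> irrX X0; wlog le12 : x1 x2 / size x1 <= size x2.
  move=> sym X1 X2 P1 P2; have [le | /ltnW le] := leqP (size x1) (size x2).
    exact: (sym x1 x2).
  by apply/esym/(sym x2 x1).
move=> X1 X2 /prefixP[t1 ->] /prefixP[t2 /eq_cat_prefix/(_ le12)[d Ex2]].
have [d0 | d0] := eqVneq d [::]; first by rewrite Ex2 d0 cats0.
case: irrX; apply: (reducible_split X0 X2 Ex2 _ d0 (Or31 _ _ X1)).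
by apply: contraNneq X0 => <-.
Qed.

Lemma irreducible_suffix_free X x1 x2 w : ~ reducible X -> [::] \notin X ->
  x1 \in X -> x2 \in X -> suffix x1 w -> suffix x2 w -> x1 = x2.
Proof.
move=> irrX X0; wlog le12 : x1 x2 / size x1 <= size x2.
  move=> sym X1 X2 P1 P2; have [le | /ltnW le] := leqP (size x1) (size x2).
    exact: (sym x1 x2).
  by apply/esym/(sym x2 x1).
move=> X1 X2 /suffixP[t1 ->] /suffixP[t2 /eq_cat_suffix/(_ le12)[d Ex2]].
have [d0 | d0] := eqVneq d [::]; first by rewrite Ex2 d0.
case: irrX; apply: (reducible_split X0 X2 Ex2 d0 _ (Or32 _ _ X1)).
by apply: contraNneq X0 => <-.
Qed.

Definition inner_suffixes X := [seq drop i x | x <- X, i <- iota 1 (size x).-1].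

Lemma inner_suffixesP X g :
  reflect (exists x b, [/\ x \in X, b != [::], g != [::] & x = b ++ g])
          (g \in inner_suffixes X).
Proof.
apply: (iffP allpairsPdep) => [[x [i [xX]]] | [x [b [xX b0 g0 Ex]]]].
  rewrite mem_iota => lt_i ->; exists x, (take i x); split => //; last by rewrite cat_take_drop.
    by move: lt_i; rewrite -size_eq0 size_take_min; lia.
  by move: lt_i; rewrite -size_eq0 size_drop; lia.
exists x, (size b); split => //; last by rewrite Ex drop_size_cat.
by move: b0 g0; rewrite mem_iota Ex size_cat -!size_eq0; lia.
Qed.

Lemma inner_suffixes_cat X a b g : a \in inner_suffixes X -> a = b ++ g ->
  b != [::] -> g != [::] -> g \in inner_suffixes X.
Proof.
move=> /inner_suffixesP[x [c [xX c0 _ Ex]]] Ea b0 g0; apply/inner_suffixesP.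
exists x, (c ++ b); split => //; first by case: c c0 {Ex}.
by rewrite Ex Ea catA.
Qed.

Lemma size_inner_suffixes X : [::] \notin X -> size (inner_suffixes X) + size X = sumlen X.
Proof.
elim: X => // x X IH; rewrite inE negb_or => /andP[x0 X0].
rewrite /inner_suffixes map_cons [flatten _]/= -/(inner_suffixes X).
rewrite size_cat size_map size_iota sumlen_cons -IH //.
by move: x0; rewrite eq_sym -size_eq0 /=; lia.
Qed.

Section Phases.
Variables (X s2 : seq (seq T)).
Hypotheses (irrX : ~ reducible X) (X0 : [::] \notin X) (s2X : all (mem X) s2).

Lemma inner_phase a s r : a \in inner_suffixes X -> all (mem X) s ->
  a ++ flatten s2 = flatten s ++ r ->
  exists2 g, g \in inner_suffixes X & exists i, r = g ++ flatten (drop i s2).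
Proof.
move=> aX sX; case: s sX => [_ /= <- | z s zsX E].
  by exists a => //; exists 0; rewrite drop0.
have zX : z \in X := allP zsX z (mem_head _ _).
have /inner_suffixesP[xa [ba [xaX ba0 a0 Exa]]] := aX.
case: (@flatten_eq_cat (a :: s2) _ _ E) => [[[|i] [Ez _]] | [i [b [g [lt_i Ei b0 g0 [_ ->]]]]]].
- have z0 : z != [::] by apply: contraNneq X0 => <-.
  by move: Ez; rewrite take0; case: z z0 {zX zsX E}.
- case: irrX; apply: (reducible_relation X0 xaX Exa ba0 a0 (w1 := z :: s) (w2 := take i s2)).
  + exact: zX.
  + exact: all_mem_cons.
  + exact: all_take.
  + exact: Ez.
- exists g; last by exists i.
  case: i lt_i Ei => [|i] /= lt_i Ei; first exact: inner_suffixes_cat aX Ei b0 g0.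
  apply/inner_suffixesP; exists (nth [::] s2 i), b; split => //.
  exact: (allP s2X) (mem_nth _ lt_i).
Qed.

Lemma inner_phase_unique g m i i' : g \in inner_suffixes X -> m != [::] ->
  all (mem X) m -> g ++ flatten (drop i s2) = flatten m ++ g ++ flatten (drop i' s2) -> False.
Proof.
move=> gX m0 mX E.
have M0 : 0 < size (flatten m) by rewrite lt0n size_eq0 (flatten_eq_nil X0).
have le_ii' : i <= i'.
  rewrite leqNgt; apply/negP => /ltnW lt_i'i.
  by move/(congr1 size): E; rewrite (flatten_dropD s2 lt_i'i) !size_cat; lia.
move: E; rewrite (flatten_dropD s2 le_ii') !catA => /catIs E.
have /inner_suffixesP[x [b [xX b0 g0 Ex]]] := gX.
apply: irrX; apply: (reducible_relation X0 xX Ex b0 g0 (w1 := m ++ [:: g])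
  (w2 := take (i' - i) (drop i s2))).
- by case: m m0 mX {M0 E} => // z m _ /andP[].
- by rewrite all_cat /= mem_head !andbT; apply: all_mem_cons.
- exact: all_take (all_drop _ s2X).
- by rewrite flatten_cat /= cats0 E.
Qed.

Definition phase s1 a j g :=
  exists i, a ++ flatten s2 = flatten (take j s1) ++ g ++ flatten (drop i s2).

Lemma phase_exists s1 a j : all (mem X) s1 -> a \in inner_suffixes X ->
  prefix (flatten (take j s1)) (a ++ flatten s2) ->
  exists g, g \in inner_suffixes X /\ phase s1 a j g.
Proof.
move=> s1X aX /prefixP[r Er].
have [g gX [i Ei]] := inner_phase aX (all_take j s1X) Er.
by exists g; split => //; exists i; rewrite Er Ei.
Qed.

Lemma phase_unique s1 a j j' g : all (mem X) s1 -> g \in inner_suffixes X ->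
  j < j' -> j < size s1 -> phase s1 a j g -> phase s1 a j' g -> False.
Proof.
move=> s1X gX lt_jj' lt_js1 [i Ei] [i' Ei'].
apply: (inner_phase_unique gX (m := take (j' - j) (drop j s1)) (i := i) (i' := i')).
- by rewrite (drop_nth [::] lt_js1) -(subnSK lt_jj').
- exact: all_take (all_drop _ s1X).
- apply: (@catsI _ (flatten (take j s1))).
  by rewrite -Ei catA -flatten_takeD ?(ltnW lt_jj') // -Ei'.
Qed.

Theorem irreducible_synchronizing s1 a u : all (mem X) s1 -> a \in inner_suffixes X ->
  sumlen X * sumlen X <= size u -> prefix u (flatten s1) -> prefix u (a ++ flatten s2) ->
  False.
Proof.
move=> s1X aX Ku pu1 pu2; have [K EK] : {K | sumlen X = K} by exists (sumlen X).
rewrite EK in Ku.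
have /inner_suffixesP[xa [ba [xaX ba0 _ Exa]]] := aX.
have K_pos : 0 < K.
  rewrite -EK; apply: leq_trans _ (size_le_sumlen xaX).
  by rewrite Exa size_cat addn_gt0 lt0n size_eq0 ba0.
have K_s1 : K <= size s1.
  by have := size_flatten_le s1X; have := size_prefix pu1; rewrite EK; nia.
have phase_j (j : 'I_K) : exists g, g \in inner_suffixes X /\ phase s1 a j g.
  apply: (phase_exists s1X aX (prefix_trans _ pu2)).
  apply: prefix_of_prefix pu1 _.
    by rewrite -{2}(cat_take_drop j s1) flatten_cat prefix_prefix.
  apply: leq_trans (size_flatten_le (all_take j s1X)) (leq_trans _ Ku).
  by rewrite EK leq_mul2r size_take_min (leq_trans (geq_minl _ _) (ltnW (ltn_ord j))) orbT.
have [f fP] := fin_all_exists phase_j.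
have f_inj : injective f.
  have clash (j j' : 'I_K) : j < j' -> f j = f j' -> False.
    move=> lt_jj' Ef; have [gX Pj] := fP j; have [_ Pj'] := fP j'; rewrite -Ef in Pj'.
    exact: phase_unique s1X gX lt_jj' (leq_trans (ltn_ord j) K_s1) Pj Pj'.
  move=> j j' Ef; apply: val_inj; case: (ltngtP j j') => // lt; exfalso.
    exact: clash lt Ef.
  exact: clash lt (esym Ef).
have : K <= size (inner_suffixes X).
  rewrite -[X in X <= _](size_enum_ord K) -(size_map f).
  apply: uniq_leq_size; first by rewrite map_inj_uniq ?enum_uniq.
  by move=> g /mapP[j _ ->]; have [] := fP j.
have := size_inner_suffixes X0; have : 0 < size X by case: X xaX.
rewrite EK; lia.
Qed.

End Phases.

End Words.

Section Desubstitution.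
Variables (B C : finType) (tau : B -> seq C) (l : nat) (u v : seq C) (y : seq B).
Hypotheses (tau0 : is_morphism tau) (size_u : size u = l) (size_v : size v = l).
Hypotheses (tau_u : forall b, prefix u (tau b)) (tau_v : forall b, suffix v (tau b)).
Hypotheses (y0 : y != [::]) (y_full : forall b, b \in y).

Definition decomposable n := exists (D : finType) (q : B -> seq D) (p : D -> seq C),
  [/\ is_morphism q /\ is_morphism p, #|D| <= n,
      (forall w, mapw tau w = mapw p (mapw q w)), letter_onto q & proper_morph q].

Lemma prefix_mapw w : w != [::] -> prefix u (mapw tau w).
Proof. by case: w => // b w _; apply: prefix_catl. Qed.

Lemma decomposable_of_factorizations X (qq : B -> seq (seq C)) (b0 : B) :
  [::] \notin X -> (forall b, all (mem X) (qq b)) -> (forall b, flatten (qq b) = tau b) ->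
  (forall b, head [::] (qq b) = head [::] (qq b0)) ->
  (forall b, last [::] (qq b) = last [::] (qq b0)) -> decomposable (size X).
Proof.
move=> X0 qqX qq_tau heads lasts.
have qq0 b : qq b != [::] by rewrite -(flatten_eq_nil X0 (qqX b)) qq_tau; exact: tau0.
pose Z := undup (flatten [seq qq b | b <- enum B]).
have memZ z : (z \in Z) = [exists b, z \in qq b].
  rewrite mem_undup; apply/flatten_mapP/existsP => [[b _ zb] | [b zb]]; exists b => //.
  by rewrite mem_enum.
have qqZ b : {subset qq b <= Z} by move=> z zb; rewrite memZ; apply/existsP; exists b.
have ZX : {subset Z <= X} by move=> z; rewrite memZ => /existsP[b /(allP (qqX b))].
pose z1 := head [::] (qq b0); pose zn := last [::] (qq b0).
have z1Z : z1 \in Z.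
  by apply: (qqZ b0); rewrite /z1; case: (qq b0) (qq0 b0) => //= z t; rewrite mem_head.
pose d0 : seq_sub Z := SeqSub z1Z.
pose q b := map (insubd d0) (qq b).
pose p (d : seq_sub Z) := ssval d.
have pq b : map p (q b) = qq b.
  by rewrite -map_comp -[RHS]map_id; apply/eq_in_map => z /qqZ zZ /=; rewrite /p insubdK.
exists (seq_sub Z), q, p; split.
- split=> [b | d]; first by rewrite -size_eq0 size_map size_eq0 qq0.
  by apply: contraNneq X0 => <-; apply/ZX/(ssvalP d).
- by rewrite card_seq_sub ?undup_uniq //; apply: uniq_leq_size (undup_uniq _) ZX.
- elim=> //= b w IH; rewrite /mapw /= map_cat !flatten_cat pq qq_tau.
  by rewrite -[flatten (map p _)]/(mapw p (mapw q w)) -IH.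
- move=> d; have := ssvalP d; rewrite memZ => /existsP[b zb]; exists b.
  by apply/mapP; exists (ssval d) => //; apply: val_inj; rewrite /= insubdK // (ssvalP d).
- exists [:: insubd d0 z1], [:: insubd d0 zn]; split => // b; split.
  + rewrite /q; case: (qq b) (qq0 b) (heads b) => //= z t _ ->.
    by apply/andP; split; [apply/eqP | case: map].
  + rewrite /q; case/lastP: (qq b) (qq0 b) (lasts b) => // t z _; rewrite last_rcons => ->.
    by rewrite map_rcons -cats1; apply: suffix_suffix.
Qed.

Section Irreducible.
Variables (X s : seq (seq C)).
Hypotheses (irrX : ~ reducible X) (X0 : [::] \notin X) (sX : all (mem X) s).
Hypotheses (Es : flatten s = mapw tau y) (Kl : sumlen X * sumlen X <= l).

Lemma size_basis_le x : x \in X -> size x <= l.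
Proof. by move/size_le_sumlen => le_xK; apply: leq_trans Kl; nia. Qed.

Lemma tau_boundary_cut y1 y2 : y = y1 ++ y2 -> exists i, mapw tau y1 = flatten (take i s).
Proof.
move=> Ey; have [y20 | y2n] := eqVneq y2 [::].
  by exists (size s); rewrite take_size Es Ey y20 cats0.
have E : flatten s = mapw tau y1 ++ mapw tau y2 by rewrite Es Ey /mapw map_cat flatten_cat.
case: (flatten_eq_cat E) => [[i [-> _]] | [i [b [g [lt_i Ei b0 g0 [_ Eg]]]]]].
  by exists i.
case: (irreducible_synchronizing irrX X0 (all_drop i.+1 sX) sX (a := g) (u := u)).
- apply/inner_suffixesP; exists (nth [::] s i), b; split => //.
  exact: (allP sX) (mem_nth _ lt_i).
- by rewrite size_u.
- by rewrite Es prefix_mapw.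
- by rewrite -Eg prefix_mapw.
Qed.

Lemma tau_in_star b : in_star X (tau b).
Proof.
have [y1 [y2 Ey]] : exists y1 y2, y = y1 ++ b :: y2.
  by case/splitPr: (y_full b) => y1 y2; exists y1, y2.
have [i1 E1] := tau_boundary_cut Ey.
have [i2 E2] : exists i, mapw tau (rcons y1 b) = flatten (take i s).
  by apply: (tau_boundary_cut (y2 := y2)); rewrite Ey cat_rcons.
exists (take (i2 - i1) (drop i1 s)); split; first exact: all_take (all_drop _ sX).
by apply/esym/flatten_take_catr; rewrite -E1 -E2 /mapw -cats1 map_cat flatten_cat /= cats0.
Qed.

Lemma factor_heads_eq t1 t2 b1 b2 : all (mem X) t1 -> flatten t1 = tau b1 ->
  all (mem X) t2 -> flatten t2 = tau b2 -> head [::] t1 = head [::] t2.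
Proof.
have head_prefix t b : all (mem X) t -> flatten t = tau b ->
    head [::] t \in X /\ prefix (head [::] t) u.
  case: t => [_ /esym/eqP | z t /andP[zX _] Et]; first by rewrite (negbTE (tau0 b)).
  split => //; apply: prefix_of_prefix (tau_u b) _; first by rewrite -Et prefix_prefix.
  by rewrite size_u size_basis_le.
move=> A1 E1 A2 E2; have [X1 P1] := head_prefix _ _ A1 E1; have [X2 P2] := head_prefix _ _ A2 E2.
exact: irreducible_prefix_free irrX X0 X1 X2 P1 P2.
Qed.

Lemma factor_lasts_eq t1 t2 b1 b2 : all (mem X) t1 -> flatten t1 = tau b1 ->
  all (mem X) t2 -> flatten t2 = tau b2 -> last [::] t1 = last [::] t2.
Proof.
have last_suffix t b : all (mem X) t -> flatten t = tau b ->
    last [::] t \in X /\ suffix (last [::] t) v.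
  case: t => [_ /esym/eqP | z t zt Et]; first by rewrite (negbTE (tau0 b)).
  split; first exact: (allP zt) (mem_last _ _).
  apply: suffix_of_suffix (tau_v b) _.
    by rewrite -Et lastI flatten_rcons last_rcons suffix_suffix.
  by rewrite size_v size_basis_le //; apply: (allP zt) (mem_last _ _).
move=> A1 E1 A2 E2; have [X1 P1] := last_suffix _ _ A1 E1; have [X2 P2] := last_suffix _ _ A2 E2.
exact: irreducible_suffix_free irrX X0 X1 X2 P1 P2.
Qed.

Lemma irreducible_decomposable : decomposable (size X).
Proof.
have [qq qqP] := fin_all_exists tau_in_star.
have qqX b : all (mem X) (qq b) by case: (qqP b).
have qq_tau b : flatten (qq b) = tau b by case: (qqP b).
have b0 : B by case: y y0 y_full => // b0.
apply: (decomposable_of_factorizations (b0 := b0) X0 qqX qq_tau) => b.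
  exact: factor_heads_eq (qqX b) (qq_tau b) (qqX b0) (qq_tau b0).
exact: factor_lasts_eq (qqX b) (qq_tau b) (qqX b0) (qq_tau b0).
Qed.

End Irreducible.

Lemma decomposable_of_basis X : [::] \notin X -> sumlen X * sumlen X <= l ->
  in_star X (mapw tau y) -> decomposable (size X).
Proof.
have [n] := ubnP (sumlen X); elim: n X => // n IH X lt_Xn X0 Kl [s [sX Es]].
have [[Y le_YX [lt_YX Y0 XY]] | irrX] := classic (reducible X); last first.
  exact: irreducible_decomposable irrX X0 sX Es Kl.
have [D [q [p [morph card_D tau_pq onto_q proper_q]]]] : decomposable (size Y).
  apply: IH => //; first exact: leq_trans lt_YX lt_Xn.
    by apply: leq_trans Kl; apply: leq_mul; apply: ltnW.
  by apply: in_star_trans XY _; exists s.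
by exists D, q, p; split => //; apply: leq_trans card_D le_YX.
Qed.

End Desubstitution.

Theorem lemma3p6 (A B C : finType) (phi : A -> seq C) (tau : B -> seq C)
    (l : nat) :
  is_morphism phi -> is_morphism tau ->
  r_proper l tau -> (size1 phi) ^ 4 <= l ->
  (exists (x : seq A) (y : seq B),
      [/\ in_plus x, in_plusplus y & mapw phi x = mapw tau y]) ->
  exists (D : finType) (q : B -> seq D) (p : D -> seq C),
    [/\ is_morphism q /\ is_morphism p,
        #|D| <= #|A|,
        (forall w : seq B, mapw tau w = mapw p (mapw q w)),
        letter_onto q & proper_morph q].
Proof.
move=> phi0 tau0 [u [v [size_u size_v tau_uv]]] phi_l [x [y [_ [y0 y_full] Exy]]].
pose X := map phi (enum A).
have sumX : sumlen X = size1 phi by rewrite /sumlen /size1 -map_comp sumnE big_map big_enum.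
rewrite cardE -(size_map phi).
apply: (decomposable_of_basis tau0 size_u size_v (fun b => proj1 (tau_uv b))
  (fun b => proj2 (tau_uv b)) y0 y_full).
- by apply/mapP => -[a _ Ea]; move: (phi0 a); rewrite -Ea eqxx.
- rewrite sumX; apply: leq_trans phi_l; rewrite mulnn.
  by case: (size1 phi) => // k; rewrite leq_pexp2l.
- exists (map phi x); split; last exact: Exy.
  by apply/allP => z /mapP[a _ ->]; apply: map_f; rewrite mem_enum.
Qed.
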